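(* Let $X\subset\mathbb{R}^d$ be a complementary regular set, $f:\mathbb{R}^d\to\mathbb{R}$ a $C^2$ function, and $c$ a regular value of $f_{|X}$. Let $\eta:\mathbb{R}^d\to\mathbb{R}^d$ be smooth with $\sup_x\|\eta(x)\|\le1$, and $f_r(x)=f(x+r\eta(x))$. Then, in the Hausdorff distance, $\lim_{r\to0^+}\big(X^{-r}\cap f_r^{-1}(-\infty,c]\big)=X\cap f^{-1}(-\infty,c]$.
   Context: $d_A(x)=\inf_{a\in A}\|x-a\|$; $\mathcal{C}A:=\overline{\mathbb{R}^d\setminus A}$; $X^{-r}=\{x:d_{\mathcal{C}X}(x)\ge r\}$. Clarke gradient $\partial\phi(x)$: convex hull of limits $\lim_i\nabla\phi(x_i)$, $x_i\to x$, $\phi$ differentiable at $x_i$; $\Delta(B)=\inf_{b\in B}\|b\|$. Reach of closed $A$: supremum of $t\ge0$ such that every $x$ with $d_A(x)<t$ has a unique nearest point in $A$; $\operatorname{reach}_\mu(A)=\sup\{s:\Delta(\partial d_A(x))\ge\mu\text{ for all }x\text{ with }0<d_A(x)\le s\}$. Complementary regular: compact $X$ with $\overline{\operatorname{int}X}=X$, $\operatorname{reach}_\mu(X)>0$ for some $\mu\in(0,1]$, $\operatorname{reach}(\mathcal{C}X)>0$. Tangent cone $\operatorname{Tan}(A,x)$: cone generated by limits of $(x_n-x)/\|x_n-x\|$, $x_n\in A\setminus\{x\}$, $x_n\to x$; polar $B^\circ=\{u:\langle u,b\rangle\le0\ \forall b\in B\}$; $\operatorname{Nor}(A,x)=\operatorname{Tan}(A,x)^\circ$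 for $A$ of positive reach; $\operatorname{Nor}(X,x):=-\operatorname{Nor}(\mathcal{C}X,x)$ for $x\in\partial X$, $\{0\}$ for interior $x$. $x\in X$ is critical for $f_{|X}$ if $\nabla f(x)\in-\operatorname{Nor}(X,x)$; $c$ is regular if $X\cap f^{-1}(c)$ contains no critical point. *)

(* Points of R^d are row vectors 'rV[R]_d;
   the Euclidean norm and inner product are defined explicitly below
   (the library's default norm on 'rV is the max norm; it induces the
   same topology, so library notions closure/interior/compact/continuous
   and sequence convergence are the usual Euclidean ones). *)
From HB Require Import structures.
From mathcomp Require Import all_boot all_order all_algebra.
From mathcomp Require Import all_classical all_reals all_analysis.
Set Implicit Arguments. Unset Strict Implicit. Unset Printing Implicit Defensive.
Import Order.TTheory GRing.Theory Num.Theory.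
Import numFieldNormedType.Exports.
Local Open Scope classical_set_scope.
Local Open Scope ring_scope.

Section Defs.
Context {R : realType} {d : nat}.
Local Notation V := 'rV[R]_d.

Definition evec (i : 'I_d) : V := delta_mx 0 i.
Definition dotp (u v : V) : R := \sum_i u 0 i * v 0 i.
Definition enorm (u : V) : R := Num.sqrt (dotp u u).

Definition distA (A : set V) (x : V) : R := inf [set enorm (x - a) | a in A].
Definition Ccl (A : set V) : set V := closure (~` A).
Definition inner_parallel (X : set V) (r : R) : set V :=
  [set x | r <= distA (Ccl X) x].

Definition grad (phi : V -> R) (x : V) : V := \row_i ('D_(evec i) phi x).

Definition grad_limits (phi : V -> R) (x : V) : set V :=
  [set g | exists xs : nat -> V,
     xs @ \oo --> x /\ (forall n, differentiable phi (xs n)) /\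
     (fun n => grad phi (xs n)) @ \oo --> g].

Definition conv_hull (B : set V) : set V :=
  [set y | exists n (w : 'I_n -> R) (p : 'I_n -> V),
     (forall i, 0 <= w i) /\ \sum_i w i = 1 /\ (forall i, B (p i)) /\
     y = \sum_i w i *: p i].

Definition clarke (phi : V -> R) (x : V) : set V := conv_hull (grad_limits phi x).

Definition Delta (B : set V) : R := inf [set enorm b | b in B].

Definition reach_mu (A : set V) (mu : R) : \bar R :=
  ereal_sup [set s%:E | s in [set s : R | forall x,
     0 < distA A x <= s -> mu <= Delta (clarke (distA A) x)]].

Definition unique_nearest (A : set V) (x : V) : Prop :=
  exists! a, A a /\ enorm (x - a) = distA A x.

Definition reach (A : set V) : \bar R :=
  ereal_sup [set t%:E | t in [set t : R | 0 <= t /\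
     forall x, distA A x < t -> unique_nearest A x]].

Definition complementary_regular (X : set V) : Prop :=
  [/\ compact X, closure (interior X) = X,
      (exists mu : R, 0 < mu <= 1 /\ (0 < reach_mu X mu)%E)
    & (0 < reach (Ccl X))%E].

Definition tan_dirs (A : set V) (x : V) : set V :=
  [set u | exists xs : nat -> V,
     (forall n, A (xs n) /\ xs n != x) /\ xs @ \oo --> x /\
     (fun n => (enorm (xs n - x))^-1 *: (xs n - x)) @ \oo --> u].

Definition Tan (A : set V) (x : V) : set V :=
  [set v | v = 0 \/ exists l u, 0 <= l /\ tan_dirs A x u /\ v = l *: u].

Definition polar (B : set V) : set V :=
  [set u | forall b, B b -> dotp u b <= 0].

Definition Nor (A : set V) (x : V) : set V := polar (Tan A x).

Definition NorX (X : set V) (x : V) : set V :=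
  if `[< interior X x >] then [set 0] else [set - u | u in Nor (Ccl X) x].

Definition critical (X : set V) (f : V -> R) (x : V) : Prop :=
  X x /\ [set - u | u in NorX X x] (grad f x).

Definition regular_value (X : set V) (f : V -> R) (c : R) : Prop :=
  forall x, X x -> f x = c -> ~ critical X f x.

Fixpoint Ck (W : normedModType R) (k : nat) (g : V -> W) {struct k} : Prop :=
  continuous g /\
  match k with
  | 0 => True
  | k'.+1 => forall i, (forall x, derivable g x (evec i)) /\
                        Ck k' (fun x => 'D_(evec i) g x)
  end.

Definition smooth (W : normedModType R) (g : V -> W) : Prop := forall k, Ck k g.

Definition enlarge (A : set V) (e : R) : set V :=
  [set y | exists2 a, A a & enorm (y - a) <= e].

Definition hausdorff (A B : set V) : \bar R :=
  ereal_inf [set e%:E | e in [set e : R | 0 <= e /\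
     A `<=` enlarge B e /\ B `<=` enlarge A e]].

End Defs.

(* For small r the perturbed set X^{-r} ∩ {f_r <= c} lies in X, and f_r is uniformly
   close to f on the compact X, so its points are near X ∩ {f <= c}.  Conversely, every
   b in X ∩ {f <= c} is a limit of points y with d(y, CX) > 0 and f(y) < c, and such a y
   belongs to the perturbed set for all small r.  When f(b) = c such points are found
   along a direction v with ∇f(b)·v < 0 entering int X: in the interior v = -∇f(b); on
   the boundary, the positive reach of CX yields a ball inside X touching ∂X at b, which
   puts the tangent directions of CX at b in a half-space, while regularity of c gives a
   tangent direction w with ∇f(b)·w > 0, from which v is separated.  Compactness of X
   makes the choice of r uniform. *)

From HB Require Import structures.
From mathcomp Require Import all_boot all_order all_algebra.
From mathcomp Require Import all_classical all_reals all_analysis.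
From mathcomp Require Import ring lra.
Import Order.TTheory GRing.Theory Num.Theory.
Import numFieldNormedType.Exports.
Local Open Scope classical_set_scope.
Local Open Scope ring_scope.

Section Euclidean.
Context {R : realType} {d : nat}.
Local Notation V := 'rV[R]_d.
Implicit Types (u v w : V) (a : R).

Lemma dotpC u v : dotp u v = dotp v u.
Proof. by apply: eq_bigr => i _; rewrite mulrC. Qed.

Lemma dotpDl u v w : dotp (u + v) w = dotp u w + dotp v w.
Proof. by rewrite /dotp -big_split; apply: eq_bigr => i _; rewrite mxE mulrDl. Qed.

Lemma dotpDr u v w : dotp w (u + v) = dotp w u + dotp w v.
Proof. by rewrite dotpC dotpDl !(dotpC w). Qed.

Lemma dotpZl a u v : dotp (a *: u) v = a * dotp u v.
Proof. by rewrite /dotp mulr_sumr; apply: eq_bigr => i _; rewrite mxE mulrA. Qed.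

Lemma dotpZr a u v : dotp u (a *: v) = a * dotp u v.
Proof. by rewrite dotpC dotpZl dotpC. Qed.

Lemma dotpNl u v : dotp (- u) v = - dotp u v.
Proof. by rewrite -scaleN1r dotpZl mulN1r. Qed.

Lemma dotpNr u v : dotp u (- v) = - dotp u v.
Proof. by rewrite dotpC dotpNl dotpC. Qed.

Lemma dotpBr u v w : dotp w (u - v) = dotp w u - dotp w v.
Proof. by rewrite dotpDr dotpNr. Qed.

Lemma dotp0l v : dotp 0 v = 0.
Proof. by rewrite /dotp big1 // => i _; rewrite mxE mul0r. Qed.

Lemma dotp0r v : dotp v 0 = 0.
Proof. by rewrite dotpC dotp0l. Qed.

Lemma dotpp_ge0 u : 0 <= dotp u u.
Proof. by rewrite /dotp sumr_ge0 // => i _; rewrite -expr2 sqr_ge0. Qed.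

Lemma dotpp_eq0 u : (dotp u u == 0) = (u == 0).
Proof.
apply/idP/eqP => [|->]; last by rewrite dotp0l.
rewrite /dotp psumr_eq0 => [/allP u0|i _]; last by rewrite -expr2 sqr_ge0.
apply/rowP => i; have := u0 i (mem_index_enum i).
by rewrite -expr2 sqrf_eq0 mxE => /eqP.
Qed.

Lemma dotpDD u v : dotp (u + v) (u + v) = dotp u u + 2 * dotp u v + dotp v v.
Proof. by rewrite dotpDl !dotpDr (dotpC v u); ring. Qed.

Lemma dotpBB u v : dotp (u - v) (u - v) = dotp u u - 2 * dotp u v + dotp v v.
Proof. by rewrite dotpDD dotpNr dotpNl dotpNr opprK; ring. Qed.

Lemma dotp_evec u (i : 'I_d) : dotp u (evec i) = u 0 i.
Proof.
rewrite /dotp (bigD1 i) //= big1 => [|j ji]; rewrite !mxE ?eqxx ?mulr1 ?addr0 //.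
by rewrite (negbTE ji) mulr0.
Qed.

Lemma enorm_ge0 u : 0 <= enorm u.
Proof. exact: sqrtr_ge0. Qed.

Lemma enorm_sqr u : enorm u ^+ 2 = dotp u u.
Proof. by rewrite sqr_sqrtr // dotpp_ge0. Qed.

Lemma enorm_eq0 u : (enorm u == 0) = (u == 0).
Proof. by rewrite sqrtr_eq0 le_eqVlt ltNge dotpp_ge0 orbF dotpp_eq0. Qed.

Lemma enorm_gt0 u : (0 < enorm u) = (u != 0).
Proof. by rewrite lt_neqAle enorm_ge0 andbT eq_sym enorm_eq0. Qed.

Lemma enorm0 : enorm (0 : V) = 0.
Proof. by apply/eqP; rewrite enorm_eq0. Qed.

Lemma enormZ a u : enorm (a *: u) = `|a| * enorm u.
Proof. by rewrite /enorm dotpZl dotpZr mulrA -expr2 sqrtrM ?sqr_ge0 // sqrtr_sqr. Qed.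

Lemma enormN u : enorm (- u) = enorm u.
Proof. by rewrite -scaleN1r enormZ normrN1 mul1r. Qed.

Lemma enormB u v : enorm (u - v) = enorm (v - u).
Proof. by rewrite -enormN opprB. Qed.

Lemma enorm_evec (i : 'I_d) : enorm (evec i : V) = 1.
Proof. by rewrite /enorm dotp_evec /evec mxE !eqxx sqrtr1. Qed.

Lemma ler_enorm u v : (enorm u <= enorm v) = (dotp u u <= dotp v v).
Proof. by rewrite ler_sqrt // dotpp_ge0. Qed.

Lemma enorm_le u a : 0 <= a -> (enorm u <= a) = (dotp u u <= a ^+ 2).
Proof. by move=> a0; rewrite -enorm_sqr ler_pXn2r // nnegrE enorm_ge0. Qed.

Lemma enorm_ge u a : 0 <= a -> (a <= enorm u) = (a ^+ 2 <= dotp u u).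
Proof. by move=> a0; rewrite -enorm_sqr ler_pXn2r // nnegrE enorm_ge0. Qed.

Lemma dotp_sqr_le u v : dotp u v ^+ 2 <= dotp u u * dotp v v.
Proof.
have [/eqP|v0] := eqVneq (dotp v v) 0.
  by rewrite dotpp_eq0 => /eqP ->; rewrite dotp0r dotp0l expr0n mulr0.
have vp : 0 < dotp v v by rewrite lt_neqAle eq_sym v0 dotpp_ge0.
have := dotpp_ge0 (u - (dotp u v / dotp v v) *: v).
rewrite dotpBB dotpZr dotpZl dotpZr.
have -> : dotp u u - 2 * (dotp u v / dotp v v * dotp u v) +
    dotp u v / dotp v v * (dotp u v / dotp v v * dotp v v)
    = dotp u u - dotp u v ^+ 2 / dotp v v by field.
by rewrite subr_ge0 ler_pdivrMr.
Qed.

Lemma normr_dotp_le u v : `|dotp u v| <= enorm u * enorm v.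
Proof.
rewrite -(ler_pXn2r (n := 2)) ?nnegrE ?mulr_ge0 ?enorm_ge0 //.
by rewrite real_normK ?num_real // exprMn !enorm_sqr dotp_sqr_le.
Qed.

Lemma dotp_le u v : dotp u v <= enorm u * enorm v.
Proof. exact: le_trans (ler_norm _) (normr_dotp_le u v). Qed.

Lemma enormD_le u v : enorm (u + v) <= enorm u + enorm v.
Proof.
rewrite enorm_le ?addr_ge0 ?enorm_ge0 // dotpDD sqrrD !enorm_sqr.
by have := dotp_le u v; lra.
Qed.

Lemma enorm_dist_le u v w : enorm (u - w) <= enorm (u - v) + enorm (v - w).
Proof. by apply: le_trans (enormD_le _ _); rewrite addrA subrK. Qed.

Lemma coord_le_enorm u i : `|u 0 i| <= enorm u.
Proof.
rewrite -sqrtr_sqr ler_wsqrtr // /dotp (bigD1 i) //= -expr2.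
by rewrite lerDl sumr_ge0 // => j _; rewrite -expr2 sqr_ge0.
Qed.

Lemma normr_le_enorm u : `|u| <= enorm u.
Proof.
rewrite [`|u|]mx_normrE; apply: bigmax_le => [|[i j] _]; first exact: enorm_ge0.
by rewrite (ord1 i); exact: coord_le_enorm.
Qed.

Lemma enorm_le_normr u : enorm u <= d.+1%:R * `|u|.
Proof.
rewrite enorm_le ?mulr_ge0 ?normr_ge0 //.
apply: (@le_trans _ _ (\sum_(i < d) `|u| ^+ 2)).
  apply: ler_sum => i _; rewrite -expr2 -real_normK ?num_real //.
  rewrite ler_pXn2r ?nnegrE ?normr_ge0 // [`|u|]mx_normrE.
  exact: (le_bigmax _ _ (ord0, i)).
rewrite sumr_const card_ord exprMn -[_ *+ d]mulr_natl ler_wpM2r ?sqr_ge0 //.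
have : (d%:R : R) <= d.+1%:R by rewrite ler_nat.
have : (1 : R) <= d.+1%:R by rewrite ler1n.
nra.
Qed.

Lemma enorm_push_ge {n e : V} {D h eps : R} : enorm n = 1 -> 0 < D -> 0 <= h ->
  0 <= eps <= 1 -> enorm e <= eps * D -> D <= enorm (D *: n + e) ->
  D + (1 - eps) * h <= enorm ((D + h) *: n + e).
Proof.
move=> n1 D0 h0 /andP [eps0 eps1] eD De.
rewrite enorm_ge ?addr_ge0 ?mulr_ge0 ?subr_ge0 ?(ltW D0) //.
have nn : dotp n n = 1 by rewrite -enorm_sqr n1 expr1n.
rewrite scalerDl addrAC dotpDD dotpZr dotpZl dotpZr nn mulr1.
have Den : D - eps * D <= dotp (D *: n + e) n.
  rewrite dotpDl dotpZl nn mulr1 lerD2l.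
  have := normr_dotp_le e n; rewrite n1 mulr1 -normrN => ?.
  by rewrite -lerN2 opprK; apply: le_trans (ler_norm _) _; lra.
have := De; rewrite enorm_ge ?(ltW D0) // => DD.
have : h * (D - eps * D) <= h * dotp (D *: n + e) n by rewrite ler_wpM2l.
have : 0 <= h * h by rewrite mulr_ge0.
by nra.
Qed.

Lemma enorm_normalize (u : V) : u != 0 -> enorm ((enorm u)^-1 *: u) = 1.
Proof.
by rewrite -enorm_gt0 => u0; rewrite enormZ gtr0_norm ?invr_gt0 // mulVf ?gt_eqF.
Qed.

End Euclidean.

Section DistanceFunction.
Context {R : realType} {d : nat}.
Local Notation V := 'rV[R]_d.
Implicit Types (x y : V) (A E : set V).

Lemma nbhs_enorm x e : 0 < e -> nbhs x [set y | enorm (y - x) < e].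
Proof.
move=> e0; apply/nbhs_ballP; exists (e / d.+1%:R) => [|y]; first exact: divr_gt0.
rewrite mx_norm_ball /ball_ /= -normrN opprB => xy.
by apply: le_lt_trans (enorm_le_normr _) _; rewrite mulrC -ltr_pdivlMr.
Qed.

Lemma nbhs_enormP {x} {N : set V} : nbhs x N ->
  exists2 e, 0 < e & forall y, enorm (y - x) < e -> N y.
Proof.
move=> /nbhs_ballP [e e0 xN]; exists e => // y xy; apply: xN.
rewrite mx_norm_ball /ball_ /= -normrN opprB.
exact: le_lt_trans (normr_le_enorm _) xy.
Qed.

Lemma lipschitz_continuous (g : V -> R) K : 0 <= K ->
  (forall x y, g x - g y <= K * enorm (x - y)) -> continuous g.
Proof.
move=> K0 gK x; apply/(@cvgrPdist_lt _ _ _ (nbhs x) (nbhs_filter x)) => e e0.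
have K1 : 0 < K + 1 by rewrite ltr_wpDl.
apply: filterS (nbhs_enorm x _ (divr_gt0 e0 K1)) => y /=.
rewrite ltr_pdivlMr // enormB => xy.
have := gK x y; have := gK y x; rewrite (enormB y) ltr_norml.
have : K * enorm (x - y) <= (K + 1) * enorm (x - y).
  by rewrite ler_wpM2r ?enorm_ge0 // lerDl.
by move=> *; apply/andP; split; lra.
Qed.

Lemma continuous_enorm_sub x : continuous (fun y => enorm (y - x)).
Proof.
apply: (@lipschitz_continuous _ 1) => // y z.
by rewrite mul1r lerBlDr enorm_dist_le.
Qed.

Lemma closed_fun_le (g h : V -> R) : continuous g -> continuous h ->
  closed [set x | g x <= h x].
Proof.
have -> : [set x | g x <= h x] = (h \- g) @^-1` [set r | 0 <= r].
  by apply/seteqP; split => x /=; rewrite subr_ge0.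
move=> gc hc; apply: preimage_closed; last exact: closed_ge.
by move=> x _; apply: continuousB; [exact: hc|exact: gc].
Qed.

Lemma enorm_bounded_compact E y L : closed E ->
  (forall x, E x -> enorm (x - y) <= L) -> compact E.
Proof.
move=> Ecl EL; apply: bounded_closed_compact => //.
apply: filterS (nbhs_pinfty_ge (num_real (`|y| + L))) => M yLM x Ex /=.
apply: le_trans yLM; rewrite -[x](subrK y) addrC.
apply: le_trans (ler_normD _ _) _; rewrite lerD2l.
exact: le_trans (normr_le_enorm _) (EL x Ex).
Qed.

Lemma distA_set0 x : distA set0 x = 0.
Proof. by rewrite /distA image_set0 inf0. Qed.

Lemma lb_distA A x m : A !=set0 ->
  (forall a, A a -> m <= enorm (x - a)) -> m <= distA A x.
Proof.
move=> [a0 Aa0] mA; apply: lb_le_inf; first by exists (enorm (x - a0)), a0.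
by move=> _ [a Aa <-]; exact: mA.
Qed.

Lemma distA_le {A} x {a} : A a -> distA A x <= enorm (x - a).
Proof.
by move=> Aa; apply: ge_inf; [exists 0 => _ [b _ <-]; exact: enorm_ge0|exists a].
Qed.

Lemma distA_lipschitz A x y : distA A x <= distA A y + enorm (x - y).
Proof.
have [->|/set0P A0] := eqVneq A set0; first by rewrite !distA_set0 add0r enorm_ge0.
rewrite -lerBlDr; apply: lb_distA => // a Aa; rewrite lerBlDr.
by apply: le_trans (distA_le x Aa) _; rewrite [leRHS]addrC enorm_dist_le.
Qed.

Lemma continuous_distA A : continuous (distA A).
Proof.
apply: (@lipschitz_continuous _ 1) => // x y.
by rewrite mul1r lerBlDl distA_lipschitz.
Qed.

End DistanceFunction.

Section InteriorAndComplement.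
Context {R : realType} {d : nat}.
Local Notation V := 'rV[R]_d.
Implicit Types (X : set V) (b x y : V).

Lemma Ccl_not_interior {X b} : ~ interior X b -> Ccl X b.
Proof.
move=> Xb B bB; apply/set0P/negP => /eqP B0; apply: Xb.
apply: filterS bB => z Bz; apply/not_notP => Xz.
by have : (~` X `&` B) z by []; rewrite B0.
Qed.

Lemma distA_Ccl_gt0 {X y} : Ccl X !=set0 -> interior X y -> 0 < distA (Ccl X) y.
Proof.
move=> C0 /nbhs_enormP [e e0 yX]; apply: lt_le_trans e0 _.
apply: lb_distA => // a Ca; rewrite leNgt enormB; apply/negP => ae.
have ae0 : 0 < e - enorm (a - y) by rewrite subr_gt0.
have [z [Xz /= za]] := Ca _ (nbhs_enorm a _ ae0).
by apply: Xz; apply: yX; have := enorm_dist_le z a y; lra.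
Qed.

Lemma inner_parallel_sub {X r} : 0 < r -> inner_parallel X r `<=` X.
Proof.
move=> r0 x rx; apply/not_notP => Xx.
have := le_trans rx (distA_le x (subset_closure Xx : Ccl X x)).
by rewrite subrr enorm0 leNgt r0.
Qed.

End InteriorAndComplement.

Section FirstOrderExpansion.
Context {R : realType} {d : nat}.
Local Notation V := 'rV[R]_d.
Implicit Types (b v x : V) (t : R).

Definition row_prefix v (k : nat) : V := \row_j (if (j < k)%N then v 0 j else 0).

Lemma row_prefix0 v : row_prefix v 0 = 0.
Proof. by apply/rowP => j; rewrite !mxE. Qed.

Lemma row_prefix_full v : row_prefix v d = v.
Proof. by apply/rowP => j; rewrite !mxE ltn_ord. Qed.

Lemma row_prefixS v (k : 'I_d) : row_prefix v k.+1 = row_prefix v k + v 0 k *: evec k.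
Proof.
apply/rowP => j; rewrite !mxE eqxx /= ltnS leq_eqVlt.
have [->|jk] := eqVneq j k; first by rewrite eqxx ltnn add0r mulr1.
by rewrite (inj_eq val_inj) (negbTE jk) mulr0 addr0.
Qed.

Lemma enorm_row_prefix v k : enorm (row_prefix v k) <= enorm v.
Proof.
rewrite ler_enorm; apply: ler_sum => j _; rewrite !mxE.
by case: ifP => _ //; rewrite mul0r -expr2 sqr_ge0.
Qed.

Context {f : V -> R}.
Hypothesis f_cont : continuous f.
Hypothesis f_partial : forall i x, derivable f x (evec i).

Lemma partial_MVT x (i : 'I_d) t : exists2 s, `|s| <= `|t| &
  f (x + t *: evec i) - f x = 'D_(evec i) f (x + s *: evec i) * t.
Proof.
pose phi s := f (x + s *: evec i).
have phi' (s : R) : is_derive s 1 phi ('D_(evec i) f (x + s *: evec i)).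
  have E : (fun h : R => h^-1 *: ((phi \o shift s) (h *: 1) - phi s)) =
      (fun h => h^-1 *: ((f \o shift (x + s *: evec i)) (h *: evec i) - phi s)).
    by apply/funext => h; rewrite /phi /shift /= [_%:A]mulr1 scalerDl addrCA.
  by split; rewrite /derivable /derive E //; exact: f_partial.
have phic : continuous phi.
  move=> s; apply: (@continuous_comp _ _ _ (fun s : R => x + s *: evec i) f).
    by apply: continuousD; [exact: cst_continuous|exact: scalel_continuous].
  exact: f_cont.
suff : exists2 s, `|s| <= `|t| & phi t - phi 0 = 'D_(evec i) f (x + s *: evec i) * t.
  by rewrite /phi scale0r addr0.
have [t0|t0] := leP 0 t.
  have [s] := MVT_segment t0 (fun s _ => phi' s) (continuous_subspaceT phic).
  rewrite in_itv /= => /andP [s0 st] E; exists s; last by rewrite E subr0.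
  by rewrite !ger0_norm // (le_trans s0 st).
have [s] := MVT_segment (ltW t0) (fun s _ => phi' s) (continuous_subspaceT phic).
rewrite in_itv /= => /andP [ts s0] E; exists s.
  by rewrite ler0_norm // (ltr0_norm t0) lerN2.
by apply/eqP; rewrite -opprB E sub0r mulrN opprK.
Qed.

(* Telescope along the coordinate axes, one mean value step per coordinate. *)
Lemma increment_le b v th :
  (forall x i, enorm (x - b) <= 2 * enorm v ->
     `|'D_(evec i) f x - 'D_(evec i) f b| <= th) ->
  f (b + v) - f b <= dotp (grad f b) v + th * d%:R * enorm v.
Proof.
move=> near_b.
suff prefix k : (k <= d)%N -> f (b + row_prefix v k) - f b <=
    dotp (grad f b) (row_prefix v k) + th * k%:R * enorm v.
  by have := prefix d (leqnn d); rewrite row_prefix_full.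
elim: k => [_|k IHk kd]; first by rewrite row_prefix0 addr0 subrr dotp0r mulr0 mul0r addr0.
have /= := IHk (ltnW kd); pose i := Ordinal kd.
rewrite -[k]/(val i) row_prefixS addrA; set x := b + row_prefix v i => fx.
have [s si Ex] := partial_MVT x i (v 0 i).
have sv : enorm (x + s *: evec i - b) <= 2 * enorm v.
  rewrite /x addrAC [b + _]addrC addrK; apply: le_trans (enormD_le _ _) _.
  rewrite enormZ enorm_evec mulr1 mulr2n mulrDl mul1r.
  by rewrite lerD ?enorm_row_prefix // (le_trans si (coord_le_enorm _ _)).
have Ds := near_b _ i sv.
set Dx := 'D_(evec i) f (x + s *: evec i) in Ds Ex.
set Db := 'D_(evec i) f b in Ds.
have : (Dx - Db) * v 0 i <= th * enorm v.
  apply: le_trans (ler_norm _) _; rewrite normrM.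
  by apply: ler_pM => //; exact: coord_le_enorm.
have -> : dotp (grad f b) (row_prefix v i + v 0 i *: evec i) =
    dotp (grad f b) (row_prefix v i) + v 0 i * Db.
  by rewrite dotpDr dotpZr dotp_evec mxE.
by rewrite -natr1; lra.
Qed.

Hypothesis partial_cont : forall i, continuous ('D_(evec i) f).

Lemma descent {b v} : dotp (grad f b) v < 0 -> \forall t \near 0^'+, f (b + t *: v) < f b.
Proof.
move=> gv0; set gv := dotp _ v in gv0.
have nv1 : 0 < 2 * (d%:R * enorm v + 1).
  by rewrite mulr_gt0 // ltr_wpDl ?mulr_ge0 ?enorm_ge0.
pose th := - gv / (2 * (d%:R * enorm v + 1)).
have th0 : 0 < th by rewrite divr_gt0 // oppr_gt0.
have thv : th * d%:R * enorm v <= - gv / 2.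
  have : th * (2 * (d%:R * enorm v + 1)) = - gv by rewrite divfK // gt_eqF.
  by lra.
have : \forall x \near b, forall i, `|'D_(evec i) f x - 'D_(evec i) f b| < th.
  apply: (@filter_forall _ _ (fun i x => `|'D_(evec i) f x - 'D_(evec i) f b| < th)
    _ (nbhs_filter b)) => i.
  by apply: filterS (cvgr_dist_lt _ _ (partial_cont i b) _ th0) => x; rewrite distrC.
move=> /nbhs_enormP [del del0 near_b].
have v1 : 0 < 2 * enorm v + 1 by rewrite ltr_wpDl ?mulr_ge0 ?enorm_ge0.
near=> t.
have t0 : 0 < t by near: t; exact: nbhs_right_gt.
have tv : 2 * (t * enorm v) < del.
  have : t * (2 * enorm v + 1) < del.
    by rewrite -ltr_pdivlMr //; near: t; apply: nbhs_right_lt; rewrite divr_gt0.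
  by rewrite mulrDr mulr1 mulrCA; lra.
have := @increment_le b (t *: v) th; rewrite dotpZr enormZ gtr0_norm //.
move=> /(_ (fun x i xb => ltW (near_b x (le_lt_trans xb tv) i))); rewrite -/gv mulrCA.
have : t * (th * d%:R * enorm v) <= t * (- gv / 2) by rewrite ler_wpM2l // ltW.
have : t * gv < 0 by rewrite pmulr_rlt0.
by lra.
Unshelve. all: by end_near.
Qed.

End FirstOrderExpansion.

Section PositiveReach.
Context {R : realType} {d : nat}.
Local Notation V := 'rV[R]_d.
Implicit Types (a b c q x y z : V).

Context {A : set V} {rho : R}.
Hypothesis A_closed : closed A.
Hypothesis A_reach : forall z, distA A z < rho -> unique_nearest A z.

Lemma nearest_point {x} : distA A x < rho -> exists2 q, A q & enorm (x - q) = distA A x.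
Proof. by move=> /A_reach [q [[Aq xq] _]]; exists q. Qed.

Lemma nearest_gap {x q th} : A q -> enorm (x - q) = distA A x -> distA A x < rho ->
  0 < th -> exists2 g, 0 < g &
    forall a, A a -> enorm (a - x) < distA A x + g -> enorm (a - q) < th.
Proof.
move=> Aq xq xrho th0; set D := distA A x in xq xrho *.
pose K := A `&` [set a | enorm (a - x) <= D + 1] `&` [set a | th <= enorm (a - q)].
have [K0|/set0P [a1 Ka1]] := eqVneq K set0.
  exists 1 => // a Aa ax; rewrite ltNge; apply/negP => aq.
  have Ka : K a by split; [split => //; exact: ltW|].
  by rewrite K0 in Ka.
have Kc : compact K.
  apply: (@enorm_bounded_compact _ _ _ x (D + 1)) => [|a [[]]//].
  apply: closedI; first apply: closedI => //.
    by apply: closed_fun_le; [exact: continuous_enorm_sub|exact: cst_continuous].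
  by apply: closed_fun_le; [exact: cst_continuous|exact: continuous_enorm_sub].
have [a0 /set_mem [[Aa0 a0x] a0q] a0min] := compact_EVT_min (ex_intro _ a1 Ka1) Kc
  (continuous_subspaceT (continuous_enorm_sub x)).
have Da0 : D < enorm (a0 - x).
  rewrite lt_neqAle enormB distA_le // andbT; apply/eqP => a0D.
  have [q' [_ q'u]] := A_reach _ xrho.
  have a0q' : a0 = q by rewrite -(q'u a0 (conj Aa0 (esym a0D))) (q'u q).
  by move: a0q; rewrite /= a0q' subrr enorm0 leNgt th0.
exists (Num.min (enorm (a0 - x) - D) 1); first by rewrite lt_min subr_gt0 Da0 ltr01.
move=> a Aa ax; rewrite ltNge; apply/negP => aq.
have g1 : Num.min (enorm (a0 - x) - D) 1 <= 1 by rewrite ge_min lexx orbT.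
have g2 : D + Num.min (enorm (a0 - x) - D) 1 <= enorm (a0 - x).
  by rewrite -lerBrDl ge_min lexx.
have : enorm (a0 - x) <= enorm (a - x).
  by apply: a0min; apply/mem_set; split; [split => //=; lra|].
by lra.
Qed.

(* Almost nearest points of A are close to q (nearest_gap), so moving away from q
   along the unit normal increases the distance to A at rate almost 1. *)
Lemma distA_push {x q} eps : A q -> enorm (x - q) = distA A x ->
  0 < distA A x < rho -> 0 < eps <= 1 -> \forall h \near 0^'+,
  distA A x + (1 - eps) * h <= distA A (x + h *: ((distA A x)^-1 *: (x - q))).
Proof.
move=> Aq xq /andP [D0 Drho] /andP [eps0 eps1]; set D := distA A x in xq D0 Drho *.
have th0 : 0 < eps * D by rewrite mulr_gt0.
have [g g0 gap] := nearest_gap Aq xq Drho th0.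
set n := D^-1 *: (x - q).
have n1 : enorm n = 1 by rewrite /n -xq enorm_normalize // -enorm_gt0 xq.
have xqn : x - q = D *: n by rewrite scalerA mulfV ?gt_eqF // scale1r.
near=> h.
have h0 : 0 < h by near: h; exact: nbhs_right_gt.
have hg : h < g / 2 by near: h; apply: nbhs_right_lt; rewrite divr_gt0.
have hrho : h < rho - D by near: h; apply: nbhs_right_lt; rewrite subr_gt0.
set x' := x + h *: n.
have x'x : enorm (x' - x) = h by rewrite /x' addrAC subrr add0r enormZ n1 mulr1 gtr0_norm.
have x'D : distA A x' <= D + h by rewrite -x'x distA_lipschitz.
have [q' Aq' x'q'] : exists2 q', A q' & enorm (x' - q') = distA A x'.
  by apply: nearest_point; lra.
have qq' : enorm (q - q') <= eps * D.
  rewrite enormB ltW // gap //; have := enorm_dist_le q' x' x.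
  by rewrite (enormB q' x') x'q' x'x -/D; lra.
have Dq' : D <= enorm (D *: n + (q - q')) by rewrite -xqn addrA subrK distA_le.
have eps01 : 0 <= eps <= 1 by rewrite ltW.
have := enorm_push_ge n1 D0 (ltW h0) eps01 qq' Dq'.
have -> : (D + h) *: n + (q - q') = x' - q'.
  by rewrite scalerDl -xqn /x' addrAC subrKA addrAC.
by rewrite x'q'.
Unshelve. all: by end_near.
Qed.

(* A maximiser z of the distance to A, among the points that gained distance at rate
   1 - eps, cannot lie inside the ball of radius L: distA_push would move it further. *)
Lemma distA_grow {y L} eps : 0 < distA A y -> 0 < L -> distA A y + L < rho ->
  0 < eps < 1 ->
  exists2 z, enorm (z - y) <= L & distA A y + (1 - eps) * L <= distA A z.
Proof.
move=> t0 L0 tL /andP [eps0 eps1]; set t := distA A y in t0 tL *.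
have eps1' : 0 < 1 - eps by rewrite subr_gt0.
pose E := [set z | enorm (z - y) <= L] `&`
          [set z | t + (1 - eps) * enorm (z - y) <= distA A z].
have Ey : E y by split => /=; rewrite subrr enorm0 ?(ltW L0) // mulr0 addr0.
have Ec : compact E.
  apply: (@enorm_bounded_compact _ _ _ y L) => [|z []//].
  apply: closedI.
    by apply: closed_fun_le; [exact: continuous_enorm_sub|exact: cst_continuous].
  apply: closed_fun_le; last exact: continuous_distA.
  apply: (@lipschitz_continuous _ _ _ (1 - eps)) => [|z w]; first exact: ltW.
  rewrite opprD addrACA subrr add0r -mulrBr ler_wpM2l ?(ltW eps1') //.
  by rewrite lerBlDr enorm_dist_le.
have [z Ez zmax] := compact_EVT_max (ex_intro _ y Ey) Ec
  (continuous_subspaceT (continuous_distA A)).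
have [/= zy zt] := set_mem Ez.
have [Lz|zL] := leP L (enorm (z - y)).
  by exists z => //; apply: le_trans zt; rewrite lerD2l ler_wpM2l // ltW.
have D0 : 0 < distA A z.
  by apply: lt_le_trans zt; rewrite ltr_wpDr ?mulr_ge0 ?enorm_ge0 ?ltW.
have Drho : distA A z < rho by have := distA_lipschitz A z y; rewrite -/t; lra.
have [q Aq zq] := nearest_point Drho.
have near_h : \forall h \near 0^'+, [/\ 0 < h, h < L - enorm (z - y) &
    distA A z + (1 - eps) * h <= distA A (z + h *: ((distA A z)^-1 *: (z - q)))].
  near=> h; split; near: h; first exact: nbhs_right_gt.
    by apply: nbhs_right_lt; rewrite subr_gt0.
  by apply: distA_push => //; [rewrite D0 Drho|rewrite eps0 ltW].
have [h [h0 hL push]] := filter_ex near_h.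
set z' := z + _ in push.
have z'z : enorm (z' - z) = h.
  rewrite /z' addrAC subrr add0r enormZ -zq enorm_normalize ?mulr1 ?gtr0_norm //.
  by rewrite -enorm_gt0 zq.
have z'y : enorm (z' - y) <= enorm (z - y) + h.
  by rewrite -z'z [leRHS]addrC enorm_dist_le.
have : distA A z' <= distA A z.
  apply: zmax; apply/mem_set; split => /=; first lra.
  have : (1 - eps) * enorm (z' - y) <= (1 - eps) * (enorm (z - y) + h).
    by rewrite ler_wpM2l // ltW.
  by lra.
have : 0 < (1 - eps) * h by rewrite mulr_gt0.
by lra.
Unshelve. all: by end_near.
Qed.

Lemma distA_far_point {b s} eta : A b ->
  (forall e, 0 < e -> exists2 y, enorm (y - b) < e & 0 < distA A y) ->
  0 < s < rho -> 0 < eta <= s / 2 ->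
  exists2 c, enorm (c - b) <= s + eta & s - eta <= distA A c.
Proof.
move=> Ab b_lim /andP [s0 srho] /andP [eta0 etas].
have [y yb t0] := b_lim _ eta0.
have yt := distA_le y Ab; set t := distA A y in t0 yt.
have eps01 : 0 < eta / s < 1 by rewrite divr_gt0 // ltr_pdivrMr // mul1r; lra.
have L0 : 0 < s - t by lra.
have tL : t + (s - t) < rho by lra.
have [z zy zt] := distA_grow (eta / s) t0 L0 tL eps01.
exists z; first by have := enorm_dist_le z y b; lra.
have : eta / s * (s - t) <= eta / s * s by rewrite ler_wpM2l ?divr_ge0 ?ltW //; lra.
by rewrite divfK ?gt_eqF //; lra.
Qed.

(* Minimise |c - b| - d_A(c) over a compact set of points far from A: by
   distA_far_point the minimum is <= 0, so the open ball of radius |c - b| about c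
   misses A. *)
Lemma touching_ball b : 0 < rho -> A b ->
  (forall e, 0 < e -> exists2 y, enorm (y - b) < e & 0 < distA A y) ->
  exists2 c, c != b & forall a, A a -> enorm (c - b) <= enorm (c - a).
Proof.
move=> rho0 Ab b_lim; set s := rho / 2.
have s0 : 0 < s by rewrite divr_gt0.
have srho : 0 < s < rho by rewrite s0 /s; lra.
pose K := [set c | s / 2 <= distA A c] `&` [set c | enorm (c - b) <= 2 * s].
pose G c := enorm (c - b) - distA A c.
have G_small eta : 0 < eta <= s / 2 -> exists2 c, K c & G c <= 2 * eta.
  move=> eta01; have [c cb cA] := distA_far_point eta Ab b_lim srho eta01.
  by exists c; rewrite /G; move: eta01 => /andP [? ?]; [split => /=|]; lra.
have s2 : 0 < s / 2 by rewrite divr_gt0.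
have Kc : compact K.
  apply: (@enorm_bounded_compact _ _ _ b (2 * s)) => [|c []//].
  apply: closedI.
    by apply: closed_fun_le; [exact: cst_continuous|exact: continuous_distA].
  by apply: closed_fun_le; [exact: continuous_enorm_sub|exact: cst_continuous].
have Gc : continuous G.
  apply: (@lipschitz_continuous _ _ _ 2) => // c c'; rewrite /G.
  have := distA_lipschitz A c' c; have := enorm_dist_le c c' b.
  by rewrite (enormB c' c); lra.
have [c1 Kc1 _] : exists2 c, K c & G c <= 2 * (s / 2) by apply: G_small; rewrite s2 lexx.
have [c /set_mem [/= cA cb] cmin] := compact_EVT_min (ex_intro _ c1 Kc1) Kc
  (continuous_subspaceT Gc).
have G0 : G c <= 0.
  rewrite leNgt; apply/negP => Gc0.
  have eta01 : 0 < Num.min (s / 2) (G c / 4) <= s / 2.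
    by rewrite lt_min s2 divr_gt0 // ge_min lexx.
  have [c' Kc' Gc'] := G_small _ eta01; have := cmin c' (mem_set Kc').
  have : Num.min (s / 2) (G c / 4) <= G c / 4 by rewrite ge_min lexx orbT.
  by lra.
move: G0; rewrite /G subr_le0 => cbA; exists c => [|a Aa].
  by rewrite -subr_eq0 -enorm_gt0 (lt_le_trans _ (distA_le c Ab)) //; lra.
exact: le_trans cbA (distA_le c Aa).
Qed.

End PositiveReach.

Section TangentDirections.
Context {R : realType} {d : nat}.
Local Notation V := 'rV[R]_d.
Implicit Types (A : set V) (a b c u v w : V).

Lemma continuous_dotp u : continuous (dotp u).
Proof.
apply: (@lipschitz_continuous _ _ _ (enorm u)) => [|x y]; first exact: enorm_ge0.
by rewrite -dotpBr dotp_le.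
Qed.

Lemma touching_ball_tan_dirs {A b c w} : A b ->
  (forall a, A a -> enorm (c - b) <= enorm (c - a)) ->
  tan_dirs A b w -> dotp (c - b) w <= 0.
Proof.
move=> Ab c_ball [xs [xsA [xsb xsw]]]; set u := c - b.
have chord a : A a -> a != b ->
    dotp u ((enorm (a - b))^-1 *: (a - b)) - enorm (a - b) / 2 <= 0.
  move=> Aa ab; have ab0 : 0 < enorm (a - b) by rewrite enorm_gt0 subr_eq0.
  have := c_ball a Aa; rewrite (_ : c - a = u - (a - b)); last first.
    by rewrite /u opprB addrA subrK.
  rewrite ler_enorm [in X in _ <= X]dotpBB -/u => ?.
  rewrite dotpZr subr_le0 mulrC ler_pdivrMr // mulrAC -expr2 enorm_sqr.
  by lra.
have lim : (fun n => dotp u ((enorm (xs n - b))^-1 *: (xs n - b)) - enorm (xs n - b) / 2)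
    @ \oo --> dotp u w - enorm (b - b) / 2.
  apply: cvgB; first exact: (continuous_cvg _ (continuous_dotp u w) xsw).
  by apply: cvgM (cvg_cst _); exact: (continuous_cvg _ (continuous_enorm_sub b b) xsb).
have := cvgr_to_le lim; rewrite subrr enorm0 mul0r subr0; apply.
by apply: nearW => n; apply: chord; [exact: (xsA n).1|exact: (xsA n).2].
Qed.

Lemma separating_direction {g u w} : 0 < dotp g w -> dotp u w <= 0 -> u != 0 ->
  exists v, dotp g v < 0 /\ 0 < dotp u v.
Proof.
move=> gw uw u0; pose k := (`|dotp g u| + 1) / dotp g w.
have k0 : 0 <= k by rewrite divr_ge0 ?ltW // addr_ge0.
exists (u - k *: w); rewrite !dotpBr !dotpZr; split.
  by rewrite /k divfK ?gt_eqF //; have := ler_norm (dotp g u); lra.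
have : 0 < dotp u u by rewrite lt_neqAle eq_sym dotpp_eq0 u0 dotpp_ge0.
have : 0 <= k * - dotp u w by rewrite mulr_ge0 // oppr_ge0.
by rewrite mulrN; lra.
Qed.

End TangentDirections.

Section RegularSublevelApproximation.
Context {R : realType} {d : nat}.
Local Notation V := 'rV[R]_d.
Implicit Types (b u v y : V).

Lemma near0_enormZ_lt v {e} : 0 < e -> \forall t \near 0^'+, enorm (t *: v) < e.
Proof.
move=> e0; have v1 : 0 < enorm v + 1 by rewrite ltr_wpDl ?enorm_ge0.
near=> t.
have t0 : 0 < t by near: t; exact: nbhs_right_gt.
have : t * (enorm v + 1) < e.
  by rewrite -ltr_pdivlMr //; near: t; apply: nbhs_right_lt; rewrite divr_gt0.
by rewrite enormZ gtr0_norm // mulrDr mulr1; lra.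
Unshelve. all: by end_near.
Qed.

Lemma near0_enorm_subZ_lt {u v} : 0 < dotp u v ->
  \forall t \near 0^'+, enorm (u - t *: v) < enorm u.
Proof.
move=> uv; have v1 : 0 < dotp v v + 1 by rewrite ltr_wpDl ?dotpp_ge0.
near=> t.
have t0 : 0 < t by near: t; exact: nbhs_right_gt.
have tuv : t * (dotp v v + 1) < dotp u v.
  by rewrite -ltr_pdivlMr //; near: t; apply: nbhs_right_lt; rewrite divr_gt0.
rewrite ltNge ler_enorm -ltNge dotpBB dotpZr !dotpZl dotpZr.
by have := dotpp_ge0 v; nra.
Unshelve. all: by end_near.
Qed.

Lemma regular_grad_neq0 {X : set V} {f c b} : regular_value X f c ->
  X b -> f b = c -> interior X b -> grad f b != 0.
Proof.
move=> reg Xb fb Ib; apply/eqP => g0; apply: (reg b Xb fb); split => //.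
by rewrite /NorX asboolT //; exists 0 => //; rewrite oppr0 g0.
Qed.

Lemma regular_tan_dir {X : set V} {f c b} : regular_value X f c ->
  X b -> f b = c -> ~ interior X b ->
  exists2 w, tan_dirs (Ccl X) b w & 0 < dotp (grad f b) w.
Proof.
move=> reg Xb fb Ib; apply: contrapT => no_w; apply: (reg b Xb fb); split => //.
rewrite /NorX asboolF //; exists (- grad f b); last by rewrite opprK.
exists (grad f b) => // _ [->|[l [w [l0 [Tw ->]]]]]; first by rewrite dotp0r.
rewrite dotpZr mulr_ge0_le0 // leNgt; apply/negP => gw.
by apply: no_w; exists w.
Qed.

Context {X : set V} {rho : R}.
Hypothesis rho0 : 0 < rho.
Hypothesis X_reach : forall z, distA (Ccl X) z < rho -> unique_nearest (Ccl X) z.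
Hypothesis X_regular_closed : closure (interior X) = X.

Lemma Ccl_neq0 : Ccl X !=set0.
Proof.
apply/set0P/negP => /eqP C0.
have [|a [[]]] := X_reach 0; first by rewrite C0 distA_set0.
by rewrite C0.
Qed.

Lemma interior_points_near {b} : X b ->
  forall e, 0 < e -> exists2 y, enorm (y - b) < e & 0 < distA (Ccl X) y.
Proof.
move=> Xb e e0; rewrite -X_regular_closed in Xb.
have [y [Iy yb]] := Xb _ (nbhs_enorm b _ e0).
by exists y => //; exact: distA_Ccl_gt0 Ccl_neq0 Iy.
Qed.

Context {f : V -> R}.
Hypothesis f_cont : continuous f.
Hypothesis f_partial : forall i x, derivable f x (evec i).
Hypothesis partial_cont : forall i, continuous ('D_(evec i) f).

Lemma descent_approx {b v} : dotp (grad f b) v < 0 ->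
  (\forall t \near 0^'+, 0 < distA (Ccl X) (b + t *: v)) ->
  forall e, 0 < e -> exists y, [/\ enorm (y - b) < e, 0 < distA (Ccl X) y & f y < f b].
Proof.
move=> gv vX e e0.
have [t [tf [tX te]]] := filter_ex (filterI (descent f_cont f_partial partial_cont gv)
  (filterI vX (near0_enormZ_lt v e0))).
by exists (b + t *: v); rewrite addrAC subrr add0r.
Qed.

Lemma interior_descent_approx {b} : interior X b -> grad f b != 0 ->
  forall e, 0 < e -> exists y, [/\ enorm (y - b) < e, 0 < distA (Ccl X) y & f y < f b].
Proof.
move=> Ib g0; apply: (@descent_approx b (- grad f b)).
  by rewrite dotpNr oppr_lt0 lt_neqAle eq_sym dotpp_eq0 g0 dotpp_ge0.
have [e e0 eX] : exists2 e, 0 < e & forall y, enorm (y - b) < e -> interior X y.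
  by apply: nbhs_enormP; apply: open_nbhs_nbhs; split => //; exact: open_interior.
apply: filterS (near0_enormZ_lt (- grad f b) e0) => t tv.
by apply: distA_Ccl_gt0 Ccl_neq0 (eX _ _); rewrite addrAC subrr add0r.
Qed.

Lemma boundary_descent_approx {b w} : X b -> ~ interior X b ->
  tan_dirs (Ccl X) b w -> 0 < dotp (grad f b) w ->
  forall e, 0 < e -> exists y, [/\ enorm (y - b) < e, 0 < distA (Ccl X) y & f y < f b].
Proof.
move=> Xb Ib Tw gw; have Ab := Ccl_not_interior Ib.
have [c cb c_ball] :=
  touching_ball (@closed_closure _ _) X_reach b rho0 Ab (interior_points_near Xb).
have cb0 : c - b != 0 by rewrite subr_eq0.
have [v [gv uv]] := separating_direction gw (touching_ball_tan_dirs Ab c_ball Tw) cb0.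
apply: (descent_approx gv); apply: filterS (near0_enorm_subZ_lt uv) => t tv.
apply: lt_le_trans (_ : 0 < enorm (c - b) - enorm (c - b - t *: v)) _; first by lra.
apply: lb_distA Ccl_neq0 _ => a Aa.
have := enorm_dist_le c (b + t *: v) a; have := c_ball a Aa.
by rewrite (_ : c - (b + t *: v) = c - b - t *: v) ?opprD ?addrA //; lra.
Qed.

Lemma sublevel_approx {c b} : regular_value X f c -> X b -> f b <= c ->
  forall e, 0 < e -> exists y, [/\ enorm (y - b) < e, 0 < distA (Ccl X) y & f y < c].
Proof.
move=> reg Xb fbc e e0; have [fb_lt|fb_ge] := ltP (f b) c.
  have cfb : 0 < c - f b by rewrite subr_gt0.
  have [del del0 bf] := nbhs_enormP (cvgr_dist_lt _ _ (f_cont b) _ cfb).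
  have [|y yb yX] := interior_points_near Xb (Num.min e del); first by rewrite lt_min e0.
  move: yb; rewrite lt_min => /andP [ye ydel]; exists y; split => //.
  by have := bf y ydel; rewrite ltr_distl; lra.
have fb : f b = c by apply/eqP; rewrite eq_le fbc.
rewrite -fb; have [Ib|Ib] := pselect (interior X b).
  exact: interior_descent_approx Ib (regular_grad_neq0 reg Xb fb Ib) e e0.
have [w Tw gw] := regular_tan_dir reg Xb fb Ib.
exact: boundary_descent_approx Xb Ib Tw gw e e0.
Qed.

End RegularSublevelApproximation.

Section HausdorffLimit.
Context {R : realType} {d : nat}.
Local Notation V := 'rV[R]_d.

Lemma hausdorff_cvg0 {T : Type} {F : set_system T} {FF : Filter F} (A B : T -> set V) :
  (forall e, 0 < e -> \forall r \near F,
     A r `<=` enlarge (B r) e /\ B r `<=` enlarge (A r) e) ->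
  hausdorff (A r) (B r) @[r --> F] --> 0%:E.
Proof.
move=> AB; have near_le e : 0 < e ->
    \forall r \near F, (0 <= hausdorff (A r) (B r) <= e%:E)%E.
  move=> e0; apply: filterS (AB e e0) => r [AB' BA']; apply/andP; split.
    by apply: le_ereal_inf_tmp => _ [e' [e'0 _] <-]; rewrite lee_fin.
  by apply: ereal_inf_lbound; exists e => //; split; [exact: ltW|split].
have fin (h : \bar R) (e : R) : (0 <= h <= e%:E)%E -> h \is a fin_num.
  by move=> /andP [h0 he]; rewrite ge0_fin_numE // (le_lt_trans he) // ltry.
apply/fine_cvgP; split; first by apply: filterS (near_le 1 ltr01) => r /fin.
apply/cvgrPdist_le => e e0.
apply: filterS (near_le e e0) => r /[dup] /fin hfin /andP [h0 he].
by rewrite /= sub0r normrN ger0_norm ?fine_ge0 // -lee_fin fineK.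
Qed.

End HausdorffLimit.

Section PerturbedSublevelSets.
Context {R : realType} {d : nat}.
Local Notation V := 'rV[R]_d.
Context {X : set V} {f : V -> R} {c : R} {eta : V -> V}.
Hypothesis X_compact : compact X.
Hypothesis f_cont : continuous f.
Hypothesis eta_le1 : forall x, enorm (eta x) <= 1.

Local Notation S := (X `&` [set x | f x <= c]).
Local Notation S_ r := (inner_parallel X r `&` [set x | f (x + r *: eta x) <= c]).

Lemma enorm_perturb_le x {r} : 0 < r -> enorm (x + r *: eta x - x) <= r.
Proof.
by move=> r0; rewrite addrAC subrr add0r enormZ gtr0_norm // ler_piMr // ltW.
Qed.

Lemma perturbed_sublevel_near e : 0 < e -> \forall r \near 0^'+, S_ r `<=` enlarge S e.
Proof.
move=> e0.
have : \forall r \near 0^'+, X `<=` (fun x => f (x + r *: eta x) <= c -> enlarge S e x).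
  apply: ((compact_near_coveringP X).1 X_compact) => x Xx.
  have [fx|fx] := leP (f x) c.
    exists ([set x' | enorm (x' - x) < e], setT) => [|[x' r] /= [x'x _] _].
      by split => /=; [exact: nbhs_enorm|exact: filterT].
    by exists x => //; exact: ltW.
  have fxc : 0 < f x - c by rewrite subr_gt0.
  have [del del0 x_del] := nbhs_enormP (cvgr_dist_lt _ _ (f_cont x) _ fxc).
  have del2 : 0 < del / 2 by rewrite divr_gt0.
  exists ([set x' | enorm (x' - x) < del / 2], [set r | 0 < r /\ r < del / 2]).
    split => /=; first exact: nbhs_enorm.
    exact: filterI (nbhs_right_gt 0) (nbhs_right_lt del2).
  move=> [x' r] [/= x'x [r0 r1]] /= fr; exfalso.
  have : enorm (x' + r *: eta x' - x) < del.
    by have := enorm_dist_le (x' + r *: eta x') x' x; have := enorm_perturb_le x' r0; lra.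
  by move=> /x_del; rewrite ltr_distl; lra.
apply: filterS2 (nbhs_right_gt 0) => r r0 XS x [rx fx].
exact: XS _ (inner_parallel_sub r0 _ rx) fx.
Qed.

Context {rho : R}.
Hypothesis rho0 : 0 < rho.
Hypothesis X_reach : forall z, distA (Ccl X) z < rho -> unique_nearest (Ccl X) z.
Hypothesis X_regular_closed : closure (interior X) = X.
Hypothesis f_partial : forall i x, derivable f x (evec i).
Hypothesis partial_cont : forall i, continuous ('D_(evec i) f).
Hypothesis c_regular : regular_value X f c.

Lemma sublevel_near_perturbed e : 0 < e -> \forall r \near 0^'+, S `<=` enlarge (S_ r) e.
Proof.
move=> e0; have e2 : 0 < e / 2 by rewrite divr_gt0.
have S_compact : compact S.
  apply: compact_closedI => //.
  by apply: closed_fun_le => //; exact: cst_continuous.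
apply: ((compact_near_coveringP S).1 S_compact) => x [Xx fx].
have [y [yx yX fy]] := sublevel_approx rho0 X_reach X_regular_closed f_cont f_partial
  partial_cont c_regular Xx fx _ e2.
have cfy : 0 < c - f y by rewrite subr_gt0.
have [del del0 y_del] := nbhs_enormP (cvgr_dist_lt _ _ (f_cont y) _ cfy).
exists ([set x' | enorm (x' - x) < e / 2],
        [set r | 0 < r /\ r < Num.min (distA (Ccl X) y) del]).
  split => /=; first exact: nbhs_enorm.
  have m0 : 0 < Num.min (distA (Ccl X) y) del by rewrite lt_min yX.
  exact: filterI (nbhs_right_gt 0) (nbhs_right_lt m0).
move=> [x' r] [/= x'x [r0]]; rewrite lt_min => /andP [ry rdel].
exists y; last by have := enorm_dist_le x' x y; rewrite (enormB x y); lra.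
split; first exact: ltW.
have /y_del : enorm (y + r *: eta y - y) < del.
  exact: le_lt_trans (enorm_perturb_le y r0) _.
by rewrite ltr_distl /=; lra.
Qed.

End PerturbedSublevelSets.

Lemma reach_gt0P {R : realType} {d : nat} (A : set 'rV[R]_d) : (0 < reach A)%E ->
  exists2 rho, 0 < rho & forall z, distA A z < rho -> unique_nearest A z.
Proof.
by move=> /ereal_sup_gt [_ [rho [_ A_reach] <-]]; rewrite lte_fin; exists rho.
Qed.

Theorem mainTheorem11 (R : realType) (d : nat) (X : set 'rV[R]_d)
  (f : 'rV[R]_d -> R) (c : R) (eta : 'rV[R]_d -> 'rV[R]_d) :
  complementary_regular X ->
  Ck 2 f ->
  regular_value X f c ->
  smooth eta ->
  (forall x, enorm (eta x) <= 1) ->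
  (fun r : R => hausdorff
      (inner_parallel X r `&` [set x | f (x + r *: eta x) <= c])
      (X `&` [set x | f x <= c])) @ 0^'+ --> 0%:E.
Proof.
move=> [X_compact X_regular_closed _ /reach_gt0P [rho rho0 X_reach]] [f_cont f_C1]
  c_regular _ eta_le1.
have f_partial i x : derivable f x (evec i) by exact: (f_C1 i).1.
have partial_cont i : continuous ('D_(evec i) f) by exact: (f_C1 i).2.1.
apply: hausdorff_cvg0 => e e0; apply: filterI.
  exact: perturbed_sublevel_near X_compact f_cont eta_le1 e e0.
exact: (sublevel_near_perturbed X_compact f_cont eta_le1 rho0 X_reach X_regular_closed
  f_partial partial_cont c_regular e e0).
Qed.
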